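(* Let $D$ be a digraph rooted at $r$, let $x \in V(D) \setminus \{r\}$, and let $\mathcal{S}$ be a non-empty collection of subsets of $V(D) \setminus \{r\}$ such that each $S \in \mathcal{S}$ separates $x$ from $r$. Let $\bigvee \mathcal{S}$ be the set of those elements $s \in \bigcup \mathcal{S}$ that are separated from $r$ by every $S \in \mathcal{S}$. Then $\bigvee \mathcal{S}$ separates $x$ from $r$.
   Context: A vertex set $S$ separates a vertex $y$ from $r$ if every directed path from $r$ to $y$ contains a vertex of $S$. *)

(* A digraph D is given by a vertex type V (= V(D), possibly
   infinite) and an arc relation E : V -> V -> Prop (E u v = arc u -> v). *)
From Stdlib Require Import List.
Import ListNotations.

Fixpoint chain {V : Type} (E : V -> V -> Prop) (u : V) (l : list V) : Prop :=
  match l with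
  | [] => True
  | w :: l' => E u w /\ chain E w l'
  end.

Definition dipath {V : Type} (E : V -> V -> Prop) (r y : V) (p : list V) : Prop :=
  NoDup (r :: p) /\ chain E r p /\ last p r = y.

Definition rooted_at {V : Type} (E : V -> V -> Prop) (r : V) : Prop :=
  forall v : V, exists p : list V, dipath E r v p.

Definition separates {V : Type} (E : V -> V -> Prop) (S : V -> Prop) (y r : V) : Prop :=
  forall p : list V, dipath E r y p -> exists v, In v (r :: p) /\ S v.

Definition bigvee {V : Type} (E : V -> V -> Prop) (r : V) (SS : (V -> Prop) -> Prop)
  : V -> Prop :=
  fun s => (exists S, SS S /\ S s) /\ (forall S, SS S -> separates E S s r).

(* Let P be a path from r to x and let s be the last vertex of P lying in
   ⋃S; it exists since every S ∈ S meets P, and the segment of P after s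
   avoids ⋃S.  For S ∈ S, a path Q from r to s followed by that segment is a
   walk from r to x, which contains a path from r to x using only vertices of
   the walk.  S meets that path but not the segment, so S meets Q; hence
   s ∈ ⋁S. *)
From Stdlib Require Import List Classical.
Import ListNotations.

Section Lists.

Context {V : Type}.

Lemma last_cons (h : V) (m : list V) (d : V) : last (h :: m) d = last m h.
Proof.
  revert h d; induction m as [|c m IH]; intros h d; [reflexivity|].
  change (last (c :: m) d = last (c :: m) h). rewrite !IH. reflexivity.
Qed.

Lemma last_app (l1 l2 : list V) (d : V) : last (l1 ++ l2) d = last l2 (last l1 d).
Proof.
  revert d; induction l1 as [|h t IH]; intros d; [reflexivity|].
  change (last (h :: (t ++ l2)) d = last l2 (last (h :: t) d)).
  rewrite !last_cons, IH. reflexivity.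
Qed.

Lemma in_split_last (Q : V -> Prop) (L : list V) :
  (exists v, In v L /\ Q v) ->
  exists a v b, L = a ++ v :: b /\ Q v /\ forall w, In w b -> ~ Q w.
Proof.
  induction L as [|h t IH]; intros [v [Hv Qv]]; [destruct Hv|].
  destruct (classic (exists v, In v t /\ Q v)) as [Ht|Ht].
  - destruct (IH Ht) as (a & v' & b & -> & Qv' & Hb).
    exists (h :: a), v', b. auto.
  - exists [], h, t. repeat split.
    + destruct Hv as [->|Hv]; [exact Qv|].
      exfalso; apply Ht; eauto.
    + intros w Hw Qw. apply Ht; eauto.
Qed.

End Lists.

Section Walks.

Context {V : Type} {E : V -> V -> Prop}.

Lemma chain_app (u : V) (l1 l2 : list V) :
  chain E u (l1 ++ l2) <-> chain E u l1 /\ chain E (last l1 u) l2.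
Proof.
  revert u; induction l1 as [|h t IH]; intros u; cbn [app chain]; [tauto|].
  rewrite last_cons, IH. tauto.
Qed.

Lemma chain_split_tail {u s : V} {p a b : list V} :
  u :: p = a ++ s :: b -> chain E u p -> chain E s b /\ last b s = last p u.
Proof.
  intros Hsplit Hch. destruct a as [|h a]; cbn in Hsplit; injection Hsplit as <- ->.
  - auto.
  - apply chain_app in Hch as [_ [_ Hb]].
    rewrite last_app, last_cons. auto.
Qed.

Lemma walk_to_dipath {u : V} {l : list V} :
  chain E u l -> exists p, dipath E u (last l u) p /\ incl p l.
Proof.
  revert u; induction l as [|w l IH]; intros u Hwalk.
  - exists []. repeat split; [repeat constructor; intros []|apply incl_refl].
  - destruct Hwalk as [Huw Hw]. rewrite last_cons.
    destruct (IH w Hw) as (p & (Hnd & Hch & Hlast) & Hincl).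
    assert (Hwp : incl (w :: p) (w :: l)) by exact (incl_cons (in_eq w l) (incl_tl w Hincl)).
    destruct (classic (In u (w :: p))) as [Hin | Hnin].
    + destruct (in_split _ _ Hin) as (a & b & Hsplit).
      destruct (chain_split_tail Hsplit Hch) as [Hchb Hlb].
      exists b. repeat split.
      * rewrite Hsplit in Hnd. exact (NoDup_app_remove_l _ _ Hnd).
      * exact Hchb.
      * rewrite Hlb. exact Hlast.
      * apply (incl_tran (m := w :: p)); [|exact Hwp].
        rewrite Hsplit. intros z Hz. apply in_or_app. right. right. exact Hz.
    + exists (w :: p). repeat split.
      * constructor; assumption.
      * exact Huw.
      * exact Hch.
      * rewrite last_cons. exact Hlast.
      * exact Hwp.
Qed.

Lemma separates_through_tail {S : V -> Prop} {r s y : V} {b : list V} :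
  separates E S y r -> chain E s b -> last b s = y ->
  (forall v, In v b -> ~ S v) -> separates E S s r.
Proof.
  intros Hsep Hb Hlast Hout q (_ & Hq & Hlq).
  assert (Hwalk : chain E r (q ++ b)) by (apply chain_app; rewrite Hlq; auto).
  destruct (walk_to_dipath Hwalk) as (p & Hp & Hincl).
  rewrite last_app, Hlq, Hlast in Hp.
  destruct (Hsep p Hp) as (v & [<-|Hv] & HSv); [exists r; split; [left|]; auto|].
  apply Hincl, in_app_or in Hv as [Hv|Hv].
  - exists v. split; [right|]; assumption.
  - exfalso. exact (Hout v Hv HSv).
Qed.

End Walks.

Theorem lemma5p1 (V : Type) (E : V -> V -> Prop) (r x : V)
  (SS : (V -> Prop) -> Prop)
  (Hroot : rooted_at E r)
  (Hx : x <> r)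
  (Hne : exists S, SS S)
  (Hsub : forall S, SS S -> forall v, S v -> v <> r)
  (Hsep : forall S, SS S -> separates E S x r) :
  separates E (bigvee E r SS) x r.
Proof.
  intros p Hp. destruct Hne as [S0 HS0].
  destruct (Hsep S0 HS0 p Hp) as (v0 & Hv0 & HS0v0).
  destruct (in_split_last (fun v => exists S, SS S /\ S v) (r :: p))
    as (a & s & b & Hsplit & Hs & Hb); [eauto|].
  destruct Hp as (_ & Hch & Hlast).
  destruct (chain_split_tail Hsplit Hch) as [Hchb Hlb].
  rewrite Hlast in Hlb.
  exists s. split.
  - rewrite Hsplit. apply in_or_app. right. left. reflexivity.
  - split; [exact Hs|]. intros S HS.
    apply (separates_through_tail (Hsep S HS) Hchb Hlb).
    intros v Hv HSv. apply (Hb v Hv). eauto.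
Qed.
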